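(* For a topological space $X$ the following are equivalent: (1) $X$ is strongly star Menger; (2) for every nonempty $A\subseteq X$ and every sequence $(\mathcal U_n:n\in\omega)$ of families of open subsets of $X$ with $\overline A\subseteq\bigcup\mathcal U_n$ for every $n$, there is a sequence $(F_n:n\in\omega)$ of finite subsets of $X$ with $A\subseteq\bigcup_{n\in\omega}st(F_n,\mathcal U_n)$.
   Context: For a family $\mathcal U$ of subsets of $X$ and $A\subseteq X$, $st(A,\mathcal U)=\bigcup\{U\in\mathcal U: U\cap A\neq\emptyset\}$. A space $X$ is strongly star Menger if for every sequence $(\mathcal U_n:n\in\omega)$ of open covers of $X$ there are finite sets $F_n\subseteq X$ ($n\in\omega$) with $X=\bigcup_{n\in\omega}st(F_n,\mathcal U_n)$. *)

From HB Require Import structures.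
From mathcomp Require Import all_boot all_order.
From mathcomp Require Import all_classical topology.
Set Implicit Arguments. Unset Strict Implicit. Unset Printing Implicit Defensive.
Local Open Scope classical_set_scope.

Definition star {T : Type} (A : set T) (U : set (set T)) : set T :=
  [set x | exists2 V, U V & (V `&` A !=set0) /\ V x].

Definition open_cover {T : topologicalType} (U : set (set T)) : Prop :=
  (forall V, U V -> open V) /\ [set: T] `<=` \bigcup_(V in U) V.

Definition strongly_star_Menger (T : topologicalType) : Prop :=
  forall Us : nat -> set (set T), (forall n, open_cover (Us n)) ->
  exists F : nat -> set T, (forall n, finite_set (F n)) /\
    [set: T] `<=` \bigcup_n star (F n) (Us n).

From HB Require Import structures.
From mathcomp Require Import all_boot all_order.
From mathcomp Require Import all_classical topology.
Set Implicit Arguments. Unset Strict Implicit. Unset Printing Implicit Defensive.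
Local Open Scope classical_set_scope.

(* (1) -> (2): add the open set [~` closure A] to every [Us n] to get open
   covers of the whole space; it misses [A], so stars of the enlarged covers
   meet [A] only through members of the original families.
   (2) -> (1): take [A = setT], whose closure is the whole space. *)

Definition closure_star_Menger (T : topologicalType) : Prop :=
  forall (A : set T), A !=set0 ->
  forall Us : nat -> set (set T),
    (forall n V, Us n V -> open V) ->
    (forall n, closure A `<=` \bigcup_(V in Us n) V) ->
    exists F : nat -> set T, (forall n, finite_set (F n)) /\
      A `<=` \bigcup_n star (F n) (Us n).

Lemma star_setU1_disjoint {T : Type} (A F W : set T) (U : set (set T)) :
  W `&` A = set0 -> A `&` star F (U `|` [set W]) `<=` star F U.
Proof.
move=> WA0 x [Ax [V [UV|->] VFx]]; first by exists V.
have : (W `&` A) x by split=> //; case: VFx.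
by rewrite WA0.
Qed.

Section ClosureStarMenger.
Variable T : topologicalType.

Lemma open_cover_setU_closureC (A : set T) (U : set (set T)) :
  (forall V, U V -> open V) -> closure A `<=` \bigcup_(V in U) V ->
  open_cover (U `|` [set ~` closure A]).
Proof.
move=> Uo clAU; split.
- by move=> V [/Uo//|->]; apply/closed_openC/closed_closure.
- move=> x _; have [/clAU[V UV Vx]|nclAx] := pselect (closure A x).
  + by exists V => //; left.
  + by exists (~` closure A) => //; right.
Qed.

Lemma closureC_disjoint (A : set T) : ~` closure A `&` A = set0.
Proof.
by rewrite setIC; apply/disjoints_subset; rewrite setCK; exact: subset_closure.
Qed.

Lemma strongly_star_Menger_closure : strongly_star_Menger T -> closure_star_Menger T.
Proof.
move=> sSM A _ Us Uo clAU.
have [F [Ffin AF]] :=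
  sSM _ (fun n => open_cover_setU_closureC (Uo n) (clAU n)).
exists F; split=> // x Ax.
have [n _ Fx] := AF x I.
exists n => //; exact: (star_setU1_disjoint (closureC_disjoint A)).
Qed.

Lemma closure_strongly_star_Menger : closure_star_Menger T -> strongly_star_Menger T.
Proof.
move=> cSM Us Uc.
have [T0|/set0P T_nonempty] := eqVneq [set: T] set0.
  by exists (fun=> set0); split=> [n|]; [exact: finite_set0 | rewrite T0].
have clT : forall n, closure [set: T] `<=` \bigcup_(V in Us n) V.
  by move=> n; rewrite closureT; case: (Uc n).
by apply: cSM T_nonempty Us (fun n => (Uc n).1) clT.
Qed.

End ClosureStarMenger.

Theorem proposition2p1 (T : topologicalType) :
  strongly_star_Menger T <->
  (forall (A : set T), A !=set0 ->
   forall Us : nat -> set (set T),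
     (forall n V, Us n V -> open V) ->
     (forall n, closure A `<=` \bigcup_(V in Us n) V) ->
     exists F : nat -> set T, (forall n, finite_set (F n)) /\
       A `<=` \bigcup_n star (F n) (Us n)).
Proof.
split; [exact: strongly_star_Menger_closure | exact: closure_strongly_star_Menger].
Qed.
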